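(* Let $m\ge 2$, $\alpha_0\in(0,\tfrac{\pi}{2})$ and $b=\tfrac12\tan\alpha_0$. Then the set $$S^m_{\alpha_0}=\Big\{z\in\mathbb{C}^m:\ \text{for each }k,\ z_k=0\text{ or }|\arg z_k|\le\alpha_0,\ \ \sum_{k=1}^m z_k=1\Big\}$$ is a convex polytope: every $z\in S^m_{\alpha_0}$ is a convex combination of the $m^2$ points $e^1,\dots,e^m$ (standard basis vectors) and the $m(m-1)$ vectors having exactly two nonzero coordinates, one equal to $\tfrac12+bi$ and another equal to $\tfrac12-bi$. In particular $S^m_{\alpha_0}$ is the convex hull of these $m^2$ points.
   Context: $\arg$ denotes the principal argument with values in $(-\pi,\pi]$. A convex polytope in $\mathbb{C}^m$ is the convex hull of finitely many points. *)

From HB Require Import structures.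
From mathcomp Require Import all_boot all_order all_algebra.
From mathcomp Require Import all_classical all_reals all_analysis.
From mathcomp Require Import complex.
Set Implicit Arguments. Unset Strict Implicit. Unset Printing Implicit Defensive.
Import Order.TTheory GRing.Theory Num.Theory.
Local Open Scope ring_scope.
Local Open Scope complex_scope.

Section Defs.
Variable R : realType.

(* Principal argument with values in (-pi, pi]; convention Arg 0 = 0. *)
Definition Arg (z : R[i]) : R :=
  let x := complex.Re z in let y := complex.Im z in
  if 0 < x then atan (y / x)
  else if x < 0 then (if 0 <= y then atan (y / x) + pi else atan (y / x) - pi)
  else if 0 < y then pi / 2 else if y < 0 then - (pi / 2) else 0.

Definition Sset (m : nat) (a0 : R) (z : 'I_m -> R[i]) : Prop :=
  (forall k, z k = 0 \/ `|Arg (z k)| <= a0) /\ \sum_(k < m) z k = 1.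

Definition std_vec (m : nat) (j : 'I_m) : 'I_m -> R[i] :=
  fun k => if k == j then 1 else 0.

Definition pair_vec (m : nat) (b : R) (j l : 'I_m) : 'I_m -> R[i] :=
  fun k => if k == j then (2^-1 +i* b) else if k == l then (2^-1 -i* b) else 0.

Definition vertex (m : nat) (b : R) (v : 'I_m -> R[i]) : Prop :=
  (exists j, v = std_vec j) \/ (exists j l, j != l /\ v = pair_vec b j l).

Definition conv_hull (m : nat) (P : ('I_m -> R[i]) -> Prop) (z : 'I_m -> R[i]) : Prop :=
  exists (n : nat) (w : 'I_n -> R) (p : 'I_n -> 'I_m -> R[i]),
    (forall i, 0 <= w i) /\ \sum_(i < n) w i = 1 /\ (forall i, P (p i)) /\
    (forall k, z k = \sum_(i < n) (w i)%:C * p i k).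

End Defs.

From HB Require Import structures.
From mathcomp Require Import all_boot all_order all_algebra.
From mathcomp Require Import all_classical all_reals all_analysis.
From mathcomp Require Import complex.
From mathcomp Require Import ring lra.
Set Implicit Arguments. Unset Strict Implicit. Unset Printing Implicit Defensive.
Import Order.TTheory GRing.Theory Num.Theory.
Local Open Scope ring_scope.

(* Put t = tan a0.  For z_k <> 0 the condition |arg z_k| <= a0 says that z_k lies
   in the sector |Im w| <= t Re w, which also contains 0; the sector is a convex
   cone, so S is convex, and every vertex lies in S.  Conversely write Im z_k = t u_k and split u into
   its positive part f and negative part g.  As sum u = 0, f and g have the same
   mass, and the product coupling c_jl = f_j g_l / sum g has row sums f, column
   sums g and vanishing diagonal.  Then
     z = sum_k (Re z_k - |u_k|) e^k + sum_(j <> l) 2 c_jl p^(jl),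
   where p^(jl) is 1/2 + bi at j and 1/2 - bi at l; the weights are nonnegative
   because |u_k| <= Re z_k, and they add up to 1 because the pair weights total
   sum_k |u_k|. *)

Section Sector.
Variable R : realType.
Local Open Scope complex_scope.

Definition sector (t : R) (z : R[i]) : Prop :=
  `|complex.Im z| <= t * complex.Re z.

Lemma ler_atan : {mono @atan R : x y / x <= y}.
Proof. exact: (le_mono (@lt_atan R)). Qed.

Section Angle.
Variable a : R.
Hypothesis a_bounds : 0 < a < pi / 2.

Lemma tanK_bounded : atan (tan a) = a.
Proof.
have [a_gt0 a_lt] := andP a_bounds.
by rewrite tanK // in_itv /= a_lt andbT (lt_trans _ a_gt0) // oppr_lt0 divr_gt0 // pi_gt0.
Qed.

Lemma tan_bounded_gt0 : 0 < tan a.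
Proof.
by rewrite ltNge -ler_atan tanK_bounded atan0 -ltNge; case/andP: a_bounds.
Qed.

Lemma norm_atan_le (s : R) : (`|atan s| <= a) = (`|s| <= tan a).
Proof.
by rewrite !ler_norml -(ler_atan (- tan a)) -(ler_atan s) atanN tanK_bounded.
Qed.

Lemma norm_Arg_le_sector (z : R[i]) :
  (z = 0 \/ `|Arg z| <= a) <-> sector (tan a) z.
Proof.
have [_ a_lt] := andP a_bounds; have t_gt0 := tan_bounded_gt0.
have pi_gt0 := pi_gt0 R.
case: z => x y; rewrite /sector /Arg /=.
have [x_lt0|x_gt0|->] := ltgtP x 0.
- split=> [[[/eqP]|]|]; first by rewrite lt_eqF.
    have := atan_gtNpi2 (y / x); have := atan_ltpi2 (y / x).
    by case: ifP => _ h1 h2; rewrite ler_norml => /andP[? ?]; lra.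
  by move=> /(le_trans (normr_ge0 _)); rewrite pmulr_rge0 // leNgt x_lt0.
- rewrite norm_atan_le normrM [`|x^-1|]gtr0_norm ?invr_gt0 // ler_pdivrMr // mulrC.
  by split=> [[[/eqP]|//]|]; [rewrite gt_eqF|right].
- rewrite mulr0 normr_le0; have [y_lt0|y_gt0|->] := ltgtP y 0.
  + split=> [[[/eqP]|]|/eqP] //; first by rewrite lt_eqF.
    by rewrite ler_norml => /andP[? ?]; lra.
  + split=> [[[/eqP]|]|/eqP] //; first by rewrite gt_eqF.
    by rewrite ler_norml => /andP[? ?]; lra.
  + by split=> // _; left.
Qed.

Lemma Sset_sector (m : nat) (z : 'I_m -> R[i]) :
  Sset a z <-> (forall k, sector (tan a) (z k)) /\ \sum_k z k = 1.
Proof.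
by split=> -[z_arg z_sum1]; split=> // k; apply/norm_Arg_le_sector.
Qed.

End Angle.

(* [Re] and [Im] are declared additive only on the alias [Rcomplex R]. *)
Lemma Re_sum (I : Type) (r : seq I) (F : I -> R[i]) :
  complex.Re (\sum_(i <- r) F i) = \sum_(i <- r) complex.Re (F i).
Proof. exact: (raddf_sum (@complex.Re R : Rcomplex R -> R)). Qed.

Lemma Im_sum (I : Type) (r : seq I) (F : I -> R[i]) :
  complex.Im (\sum_(i <- r) F i) = \sum_(i <- r) complex.Im (F i).
Proof. exact: (raddf_sum (@complex.Im R : Rcomplex R -> R)). Qed.

Lemma sector_sum (t : R) (I : Type) (r : seq I) (w : I -> R) (p : I -> R[i]) :
  (forall i, 0 <= w i) -> (forall i, sector t (p i)) ->
  sector t (\sum_(i <- r) (w i)%:C * p i).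
Proof.
move=> w_ge0 p_sector; rewrite /sector Re_sum Im_sum mulr_sumr.
apply: le_trans (ler_norm_sum _ _ _) _; apply: ler_sum => i _.
case: (p i) (p_sector i) => x y; rewrite /sector /= !mul0r subr0 addr0 => xy.
by rewrite normrM ger0_norm // mulrCA ler_wpM2l.
Qed.

End Sector.

Section Vertices.
Variables (R : realType) (m : nat).
Local Open Scope complex_scope.
Implicit Types (b t : R) (v z : 'I_m -> R[i]).

Lemma sum_std_vec (j : 'I_m) : \sum_k std_vec R j k = 1 :> R[i].
Proof. by rewrite /std_vec -big_mkcond big_pred1_eq. Qed.

Lemma sum_pair_vec b (j l : 'I_m) : j != l -> \sum_k pair_vec b j l k = 1.
Proof.
move=> jl; rewrite (bigD1 j) // (bigD1 l) 1?eq_sym //= big1 => [|k /andP[kl kj]].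
  rewrite /pair_vec eqxx eq_sym (negbTE jl) eqxx addr0.
  by apply/eqP; rewrite eq_complex /= subrr eqxx andbT; apply/eqP; field.
by rewrite /pair_vec (negbTE kl) (negbTE kj).
Qed.

Lemma vertex_sum1 b v : vertex b v -> \sum_k v k = 1.
Proof. by case=> [[j ->]|[j [l [jl ->]]]]; [exact: sum_std_vec|exact: sum_pair_vec]. Qed.

Lemma vertex_sector t v : 0 <= t -> vertex (t / 2) v -> forall k, sector t (v k).
Proof.
move=> t_ge0 [[j ->]|[j [l [_ ->]]]] k; rewrite /sector /std_vec /pair_vec.
  by case: (k == j); rewrite /= ?normr0 ?mulr0 ?mulr1.
case: (k == j); last case: (k == l);
  by rewrite /= ?normrN ?normr0 ?mulr0 // ger0_norm ?divr_ge0.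
Qed.

Lemma conv_hull_vertex_sector t z : 0 <= t -> conv_hull (vertex (t / 2)) z ->
  (forall k, sector t (z k)) /\ \sum_k z k = 1.
Proof.
move=> t_ge0 [n [w [p [w_ge0 [w_sum1 [p_vertex zE]]]]]]; split.
  move=> k; rewrite zE; apply: sector_sum => // i.
  exact: vertex_sector (p_vertex i) k.
under eq_bigr do rewrite zE.
rewrite exchange_big /=.
under eq_bigr do rewrite -mulr_sumr (vertex_sum1 (p_vertex _)) mulr1.
by rewrite -rmorph_sum w_sum1.
Qed.

End Vertices.

Section ProductCoupling.
Variables (R : numFieldType) (I : finType) (f g : I -> R).
Hypotheses (f_ge0 : forall i, 0 <= f i) (g_ge0 : forall i, 0 <= g i).
Hypothesis sum_fg : \sum_i f i = \sum_i g i.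

Definition product_coupling (i j : I) : R := f i * g j / \sum_k g k.

Lemma product_coupling_ge0 i j : 0 <= product_coupling i j.
Proof. by rewrite /product_coupling !mulr_ge0 ?invr_ge0 ?sumr_ge0. Qed.

Lemma sum_product_coupling_row i : \sum_j product_coupling i j = f i.
Proof.
rewrite /product_coupling -mulr_suml -mulr_sumr.
have [g0|g_neq0] := eqVneq (\sum_k g k) 0; last by rewrite mulfK.
have f0 : \sum_k f k = 0 by rewrite sum_fg.
by rewrite ((psumr_eq0P (fun k _ => f_ge0 k) f0) i isT) !mul0r.
Qed.

Lemma sum_product_coupling_col j : \sum_i product_coupling i j = g j.
Proof.
rewrite /product_coupling -mulr_suml -mulr_suml sum_fg.
have [g0|g_neq0] := eqVneq (\sum_k g k) 0; last by rewrite mulrC mulKf.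
by rewrite ((psumr_eq0P (fun k _ => g_ge0 k) g0) j isT) !mulr0 mul0r.
Qed.

End ProductCoupling.

Section PosNegParts.
Variable R : realFieldType.
Implicit Types r : R.

Definition pos_part r := (`|r| + r) / 2.
Definition neg_part r := (`|r| - r) / 2.

Lemma pos_part_ge0 r : 0 <= pos_part r.
Proof. by rewrite divr_ge0 // -lerBlDr sub0r -normrN ler_norm. Qed.

Lemma neg_part_ge0 r : 0 <= neg_part r.
Proof. by rewrite divr_ge0 // subr_ge0 ler_norm. Qed.

Lemma pos_partD_neg r : pos_part r + neg_part r = `|r|.
Proof. by rewrite /pos_part /neg_part; field. Qed.

Lemma pos_partB_neg r : pos_part r - neg_part r = r.
Proof. by rewrite /pos_part /neg_part; field. Qed.

Lemma pos_partM_neg r : pos_part r * neg_part r = 0.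
Proof.
rewrite /pos_part /neg_part mulrACA [_ * (_ - _)]mulrC -subr_sqr.
by rewrite real_normK ?num_real // subrr mul0r.
Qed.

End PosNegParts.

Lemma sum_if_eq (V : nmodType) (I : finType) (k : I) (F : I -> V) :
  \sum_i (if i == k then F i else 0) = F k.
Proof. by rewrite -big_mkcond big_pred1_eq. Qed.

Section Decomposition.
Variables (R : realType) (m : nat).
Local Open Scope complex_scope.

Lemma conv_hull_fin (I : finType) (P : ('I_m -> R[i]) -> Prop)
    (w : I -> R) (p : I -> 'I_m -> R[i]) (z : 'I_m -> R[i]) :
  (forall q, 0 <= w q) -> \sum_q w q = 1 -> (forall q, P (p q)) ->
  (forall k, z k = \sum_q (w q)%:C * p q k) -> conv_hull P z.
Proof.
move=> w_ge0 w_sum1 p_P zE; exists #|I|, (w \o enum_val), (p \o enum_val).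
split=> [i|]; first exact: w_ge0.
split; first by rewrite -(big_enum_val w).
by split=> [i|k]; [exact: p_P|rewrite zE (big_enum_val (fun q => (w q)%:C * p q k))].
Qed.

Definition vertex_at (b : R) (j l : 'I_m) : 'I_m -> R[i] :=
  if j == l then std_vec R j else pair_vec b j l.

Lemma vertex_at_vertex b j l : vertex b (vertex_at b j l).
Proof.
by rewrite /vertex_at; case: ifP => [_|/negbT jl]; [left; exists j|right; exists j, l].
Qed.

Lemma sum_vertex_at b (d : 'I_m -> R) (c : 'I_m -> 'I_m -> R) k :
  (forall j, c j j = 0) ->
  \sum_j \sum_l ((if j == l then d j else 0) + c j l)%:C * vertex_at b j l k
  = (d k)%:C + (\sum_l c k l)%:C * (2^-1 +i* b) + (\sum_j c j k)%:C * (2^-1 -i* b).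
Proof.
move=> c_diag0.
have termE j l : ((if j == l then d j else 0) + c j l)%:C * vertex_at b j l k =
    (if j == k then (if l == k then (d k)%:C else 0) + (c k l)%:C * (2^-1 +i* b) else 0)
    + (if l == k then (c j k)%:C * (2^-1 -i* b) else 0).
  rewrite /vertex_at /std_vec /pair_vec.
  have [<-{l}|jl] := eqVneq j l.
    have [->{k}|kj] := eqVneq k j; rewrite ?eqxx ?c_diag0 1?(eq_sym j) ?(negbTE kj) /=.
      by rewrite rmorph0 !mul0r !addr0 mulr1.
    by rewrite mulr0 addr0.
  rewrite add0r; have [->{k}|kj] := eqVneq k j.
    by rewrite eq_sym (negbTE jl) add0r addr0.
  rewrite add0r (eq_sym l k).
  by have [<-|kl] := eqVneq k l; rewrite ?mulr0.
under eq_bigr do under eq_bigr do rewrite termE.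
under eq_bigr do rewrite big_split /=.
rewrite big_split /= [X in X + _]exchange_big /=.
under eq_bigr do rewrite sum_if_eq.
under [X in _ + X]eq_bigr do rewrite sum_if_eq.
by rewrite big_split /= sum_if_eq -!mulr_suml -!rmorph_sum.
Qed.

Lemma sector_conv_hull (t : R) (z : 'I_m -> R[i]) :
  0 < t -> (forall k, sector t (z k)) -> \sum_k z k = 1 -> conv_hull (vertex (t / 2)) z.
Proof.
move=> t_gt0 z_sector z_sum1.
pose x k := complex.Re (z k); pose u k := complex.Im (z k) / t.
pose f k := pos_part (u k); pose g k := neg_part (u k).
have ux k : `|u k| <= x k.
  by rewrite normrM [`|t^-1|]gtr0_norm ?invr_gt0 // ler_pdivrMr // mulrC; exact: z_sector.
have sum_x : \sum_k x k = 1 by rewrite /x -Re_sum z_sum1.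
have sum_u : \sum_k u k = 0 by rewrite /u -mulr_suml -Im_sum z_sum1 mul0r.
have sum_fg : \sum_k f k = \sum_k g k.
  by apply/eqP; rewrite -subr_eq0 -sumrB (eq_bigr _ (fun k _ => pos_partB_neg _)) sum_u.
have f_ge0 k : 0 <= f k := pos_part_ge0 _.
have g_ge0 k : 0 <= g k := neg_part_ge0 _.
pose c j l := 2 * product_coupling f g j l.
pose W j l := (if j == l then x j - `|u j| else 0) + c j l.
apply: (@conv_hull_fin _ _ (fun q => W q.1 q.2) (fun q => vertex_at (t / 2) q.1 q.2)).
- move=> [j l]; apply: addr_ge0; first by case: ifP; rewrite // subr_ge0.
  by rewrite mulr_ge0 // product_coupling_ge0.
- have -> : 1 = \sum_k (x k + u k) by rewrite big_split /= sum_x sum_u addr0.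
  rewrite -(pair_bigA _ W); apply: eq_bigr => j _.
  rewrite big_split /=; under eq_bigr do rewrite eq_sym.
  rewrite sum_if_eq -mulr_sumr sum_product_coupling_row //.
  by have := pos_partD_neg (u j); have := pos_partB_neg (u j); rewrite /f; lra.
- by move=> q; exact: vertex_at_vertex.
move=> k; rewrite -(pair_bigA _ (fun j l => (W j l)%:C * vertex_at (t / 2) j l k)).
rewrite sum_vertex_at => [|j]; last by rewrite /c /product_coupling pos_partM_neg mul0r mulr0.
rewrite -!mulr_sumr sum_product_coupling_row // sum_product_coupling_col //.
have Im_zE : complex.Im (z k) = t * (f k - g k).
  by rewrite pos_partB_neg mulrC divfK ?gt_eqF.
apply/eqP; rewrite eq_complex /= -/(x k) Im_zE -pos_partD_neg.
by rewrite /f /g; apply/andP; split; apply/eqP; field.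
Qed.

End Decomposition.

Theorem theorem3p2 (R : realType) (m : nat) (a0 : R) :
  (2 <= m)%N -> 0 < a0 < pi / 2 ->
  forall z : 'I_m -> R[i],
    Sset a0 z <-> conv_hull (vertex (tan a0 / 2)) z.
Proof.
(* The decomposition works for every m. *)
move=> _ a0_bounds z; have tan_gt0 := tan_bounded_gt0 a0_bounds.
rewrite Sset_sector //; split=> [[]|].
  exact: sector_conv_hull.
exact: conv_hull_vertex_sector (ltW tan_gt0).
Qed.
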